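(* Let $T=\mathbb{R}^k/\mathbb{Z}^k$, let $m$ and $C$ be natural numbers, and let $\Lambda\leq T[m]$ be a subgroup with $[T[m]:\Lambda]\leq C$. Then there is a natural number $m'$ satisfying $m'\geq m/C!$ and $T[m']\leq\Lambda$.
   Context: For a natural number $m$, $T[m]$ denotes the $m$-torsion subgroup of $T$. *)

From HB Require Import structures.
From mathcomp Require Import all_boot all_order all_algebra.
From mathcomp Require Import reals.
Set Implicit Arguments. Unset Strict Implicit. Unset Printing Implicit Defensive.
Import Order.TTheory GRing.Theory Num.Theory.
Local Open Scope ring_scope.

(* The torus T = R^k / Z^k is handled through representatives in R^k:
   a subset of T is encoded by its preimage in R^k (a Z^k-invariant subset),
   subgroups of T correspond exactly to subgroups of R^k containing Z^k. *)

Definition lattice_pt (R : realType) (k : nat) (x : 'rV[R]_k) : Prop :=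
  forall i, x ord0 i \is a Num.int.

(* preimage in R^k of the m-torsion subgroup T[m] = {t in T | m t = 0} *)
Definition torsion (R : realType) (k m : nat) (x : 'rV[R]_k) : Prop :=
  lattice_pt (x *+ m).

Definition torus_subgroup (R : realType) (k : nat) (L : 'rV[R]_k -> Prop) : Prop :=
  (forall x, lattice_pt x -> L x) /\ (forall x y, L x -> L y -> L (x - y)).

(* [T[m] : L] <= C, for L <= T[m]: T[m] is covered by at most C cosets of L *)
Definition torsion_index_le (R : realType) (k m : nat)
  (L : 'rV[R]_k -> Prop) (C : nat) : Prop :=
  exists s : seq 'rV[R]_k, (size s <= C)%N /\
    forall x, torsion m x -> exists2 c, c \in s & L (x - c).

From HB Require Import structures.
From mathcomp Require Import all_boot all_order all_algebra.
From mathcomp Require Import reals.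
From mathcomp Require boolp.
From mathcomp Require Import ring.

Set Implicit Arguments.
Unset Strict Implicit.
Unset Printing Implicit Defensive.
Import Order.TTheory GRing.Theory Num.Theory.
Local Open Scope ring_scope.

(* Among the C + 1 multiples 0, x, ..., C x of a point x of T[m], two lie in
   the same coset of L, so d x lies in L for some 0 < d <= C, and hence so
   does C! x.  Thus L contains C! T[m], which is T[m'] for m' = m / gcd(m, C!)
   by Bezout, and m' >= m / C!. *)

Lemma pigeonhole_iota (T : eqType) (f : nat -> T) (s : seq T) (n : nat) :
  (size s <= n)%N -> (forall i, f i \in s) ->
  exists i j, (i < j <= n)%N /\ f i = f j.
Proof.
move=> size_s f_s; set t := [seq f i | i <- iota 0 n.+1].
have : ~~ uniq t.
  apply: contraTN size_s => uniq_t; rewrite -ltnNge.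
  have := uniq_leq_size uniq_t (_ : {subset t <= s}).
  by rewrite size_map size_iota; apply=> _ /mapP[i _ ->].
case/(uniqPn (f 0%N)) => i [j [lt_ij]]; rewrite size_map size_iota => lt_jn.
have lt_in := ltn_trans lt_ij lt_jn.
rewrite !(nth_map 0%N) ?size_iota // !nth_iota // !add0n => fij.
by exists i, j; rewrite lt_ij.
Qed.

Section Lattice.
Variables (R : realType) (k : nat).
Implicit Types (x y : 'rV[R]_k).

Lemma lattice_ptZ (z : int) x : lattice_pt x -> lattice_pt (z%:~R *: x).
Proof. by move=> x_lat i; rewrite mxE rpredM ?rpred_int. Qed.

Lemma lattice_ptMn (n : nat) x : lattice_pt x -> lattice_pt (x *+ n).
Proof. by rewrite -scaler_nat -[n%:R]/((n%:Z)%:~R); apply: lattice_ptZ. Qed.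

Lemma torsionMn (m n : nat) x : torsion m x -> torsion m (x *+ n).
Proof. by rewrite /torsion -mulrnA mulnC mulrnA; apply: lattice_ptMn. Qed.

(* With u m + v n = gcd(m, n), the preimage of y under multiplication by n
   is (v / gcd(m, n)) y, up to the lattice point u (m / gcd(m, n)) y. *)
Lemma torsion_divn_gcd_Mn (m n : nat) y : (0 < n)%N ->
  torsion (m %/ gcdn m n) y -> exists2 x, torsion m x & lattice_pt (y - x *+ n).
Proof.
move=> n_gt0 y_tor; set g := gcdn m n; set m' := (m %/ g)%N.
have g_neq0 : g%:R != 0 :> R by rewrite pnatr_eq0 -lt0n gcdn_gt0 n_gt0 orbT.
have m_eq : m%:R = m'%:R * g%:R :> R by rewrite -natrM divnK ?dvdn_gcdl.
have [u [v]] := Bezoutz m n; rewrite /gcdz !absz_nat -/g => bezout.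
have {}bezout : u%:~R * m%:R + v%:~R * n%:R = g%:R :> R.
  by rewrite -[RHS]/((g%:Z)%:~R) -bezout intrD !intrM.
exists ((v%:~R / g%:R) *: y).
  rewrite /torsion -scaler_nat scalerA.
  have -> : m%:R * (v%:~R / g%:R) = v%:~R * m'%:R :> R by rewrite m_eq; field.
  by rewrite -scalerA scaler_nat; apply: lattice_ptZ.
rewrite -scaler_nat scalerA.
have -> : n%:R * (v%:~R / g%:R) = 1 - u%:~R * m'%:R :> R.
  by rewrite -[X in X - _](divff g_neq0) -[X in X / _ - _]bezout m_eq; field.
by rewrite scalerBl scale1r opprB addrC subrK -scalerA scaler_nat; apply: lattice_ptZ.
Qed.

Variable L : 'rV[R]_k -> Prop.
Hypothesis L_subgroup : torus_subgroup L.

Lemma torus_subgroup0 : L 0.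
Proof. by apply: L_subgroup.1 => i; rewrite mxE. Qed.

Lemma torus_subgroupB x y : L x -> L y -> L (x - y).
Proof. exact: L_subgroup.2. Qed.

Lemma torus_subgroupD x y : L x -> L y -> L (x + y).
Proof.
move=> Lx Ly; rewrite -[y]opprK -[- y]sub0r.
by apply: torus_subgroupB => //; apply: torus_subgroupB => //; apply: torus_subgroup0.
Qed.

Lemma torus_subgroupMn x (n : nat) : L x -> L (x *+ n).
Proof.
move=> Lx; elim: n => [|n IHn]; first by rewrite mulr0n; apply: torus_subgroup0.
by rewrite mulrS; apply: torus_subgroupD.
Qed.

Lemma torsion_index_le_multiple (m C : nat) x :
  torsion_index_le m L C -> torsion m x -> exists2 d, (0 < d <= C)%N & L (x *+ d).
Proof.
move=> [s [size_s cover]] x_tor.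
have coset_rep i : exists c, c \in s /\ L (x *+ i - c).
  by have [c] := cover _ (torsionMn i x_tor); exists c.
have [f f_coset] := boolp.choice coset_rep.
have [i [j [/andP[lt_ij le_jC] fij]]] :=
  pigeonhole_iota size_s (fun i => (f_coset i).1).
exists (j - i)%N; first by rewrite subn_gt0 lt_ij (leq_trans (leq_subr _ _)).
have := torus_subgroupB (f_coset j).2 (f_coset i).2.
by rewrite fij opprB addrA subrK -mulrnBr // ltnW.
Qed.

Lemma torsion_index_le_fact (m C : nat) x :
  torsion_index_le m L C -> torsion m x -> L (x *+ C`!).
Proof.
move=> index_le x_tor.
have [d /dvdn_fact d_fact Lxd] := torsion_index_le_multiple index_le x_tor.
by rewrite -(divnK d_fact) mulnC mulrnA; apply: torus_subgroupMn.
Qed.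

End Lattice.

Lemma ler_divn_gcd (R : realType) (m n : nat) : (0 < n)%N ->
  m%:R / n%:R <= (m %/ gcdn m n)%:R :> R.
Proof.
move=> n_gt0; rewrite ler_pdivrMr ?ltr0n // -natrM ler_nat.
by rewrite -{1}(divnK (dvdn_gcdl m n)) leq_mul2l dvdn_leq ?dvdn_gcdr ?orbT.
Qed.

Theorem lemma3p12 (R : realType) (k m C : nat) (L : 'rV[R]_k -> Prop) :
  torus_subgroup L ->
  (forall x, L x -> torsion m x) ->
  torsion_index_le m L C ->
  exists m' : nat, (m%:R / (C`!)%:R <= m'%:R :> R) /\
    (forall x, torsion m' x -> L x).
Proof.
move=> L_subgroup _ index_le; exists (m %/ gcdn m C`!)%N.
split; first exact: ler_divn_gcd (fact_gt0 C).
move=> y /(torsion_divn_gcd_Mn (fact_gt0 C)) [x x_tor y_lat].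
rewrite -(subrK (x *+ C`!) y).
apply: torus_subgroupD => //; first exact: L_subgroup.1.
exact: torsion_index_le_fact x_tor.
Qed.
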